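(* Let $q$ be a power of the prime $p$ and let $n$ be a positive integer not divisible by $p$. Let $h\in\mathbb{F}_q[x]$ with $\gcd\left(h(x),\frac{x^n-1}{x-1}\right)=1$, and let $b(x)=\sum_{i=0}^m b_i x^i\in\mathbb{F}_q[x]$ be a permutation polynomial of $\mathbb{F}_q$. Then for every $\theta_0,\ldots,\theta_{q-1}\in\mathbb{F}_{q^n}$, the polynomial $$P(x)=L_h(x)-\frac{h(1)}{n}\cdot\mathrm{Tr}_{q^n/q}(x)+\sum_{i=0}^m\frac{b_i}{n}\cdot\mathrm{Tr}_{q^n/q}(x)^i+\sum_{i=0}^{q-1}(\theta_i^q-\theta_i)\cdot\mathrm{Tr}_{q^n/q}(x)^i$$ is a permutation polynomial of $\mathbb{F}_{q^n}$. In addition, if $\gcd\left(h(x)+1,\frac{x^n-1}{x-1}\right)=1$ and $b$ is a complete permutation polynomial of $\mathbb{F}_q$, then $P$ is a complete permutation polynomial of $\mathbb{F}_{q^n}$.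
   Context: For $u(x)=\sum_{i=0}^m a_i x^i\in\mathbb{F}_q[x]$, its linearized $q$-associate is $L_u(x)=\sum_{i=0}^m a_i x^{q^i}$. $\mathrm{Tr}_{q^n/q}(x)=x+x^q+\cdots+x^{q^{n-1}}$. A permutation polynomial of a finite field $K$ is a polynomial inducing a bijection of $K$; it is a complete permutation polynomial if moreover $b(x)+x$ induces a bijection of $K$. *)

From HB Require Import structures.
From mathcomp Require Import all_boot all_order all_algebra all_field.
Set Implicit Arguments. Unset Strict Implicit. Unset Printing Implicit Defensive.
Import GRing.Theory.
Local Open Scope ring_scope.

Definition lin_assoc (R : nzRingType) (q : nat) (u : {poly R}) : {poly R} :=
  \sum_(i < size u) u`_i *: 'X^(q ^ i).

Definition trace_poly (R : nzRingType) (q n : nat) : {poly R} :=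
  \sum_(i < n) 'X^(q ^ i).

From HB Require Import structures.
From mathcomp Require Import all_boot all_order all_algebra all_field.
Set Implicit Arguments. Unset Strict Implicit. Unset Printing Implicit Defensive.
Import GRing.Theory.
Local Open Scope ring_scope.

(* Write P(x) = L_h(x) + g(Tr x). As Tr = L_{(x^n - 1)/(x - 1)}, L_h commutes with
   Tr and acts on F_q as multiplication by h(1); moreover Tr(a) = n a on F_q and
   Tr(theta^q - theta) = 0. Hence Tr(P(x)) = b(Tr x), so P(x) = P(y) forces
   Tr x = Tr y since b permutes F_q, and then L_h(x - y) = 0 = Tr(x - y); a Bezout
   relation between h and (x^n - 1)/(x - 1) gives x = y. For P(x) + x, replace h
   by h + 1 and b by b + id. *)

Lemma horner_sum_polyC_exp (R : comNzRingType) k (a : 'I_k -> R) (p : {poly R}) x :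
  (\sum_(i < k) (a i)%:P * p ^+ i).[x] = \sum_(i < k) a i * p.[x] ^+ i.
Proof. by rewrite horner_sum; apply: eq_bigr => i _; rewrite hornerCM horner_exp. Qed.

Section LinearizedPolynomials.
Variables (F : finFieldType) (L : fieldExtType F).
Local Notation q := #|F|.
Local Notation n := (\dim {:L}).
Implicit Types (u v : {poly F}) (c : F) (x y : L).

Lemma pnat_card_pchar : [pchar L].-nat q.
Proof.
have [p p_pr pF] := finPcharP F.
have pL : p \in [pchar L] by rewrite (pchar_lalg L).
by rewrite (eq_pnat _ (pcharf_eq pL)) (card_pprimeChar pF) pnatX pnat_id.
Qed.

Lemma frobD k x y : (x + y) ^+ (q ^ k) = x ^+ (q ^ k) + y ^+ (q ^ k).
Proof. by apply: exprDn_pchar; rewrite pnatX pnat_card_pchar. Qed.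

Lemma frob0 k : (0 : L) ^+ (q ^ k) = 0.
Proof. by rewrite expr0n expn_eq0 eqn0Ngt (ltnW (finNzRing_gt1 F)). Qed.

Lemma frob_sum k I (r : seq I) (P : pred I) (f : I -> L) :
  (\sum_(i <- r | P i) f i) ^+ (q ^ k) = \sum_(i <- r | P i) f i ^+ (q ^ k).
Proof. exact: (big_morph _ (frobD k) (frob0 k)). Qed.

Lemma expq_alg c : (c%:A : L) ^+ q = c%:A.
Proof. by rewrite exprZn expr1n expf_card. Qed.

Lemma frob_fixed k y : y ^+ q = y -> y ^+ (q ^ k) = y.
Proof.
by move=> yq; elim: k => [|k IHk]; rewrite ?expr1 // expnSr exprM IHk yq.
Qed.

Lemma frob_alg k c : (c%:A : L) ^+ (q ^ k) = c%:A.
Proof. exact/frob_fixed/expq_alg. Qed.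

Lemma frobZ k c x : (c *: x) ^+ (q ^ k) = c *: x ^+ (q ^ k).
Proof. by rewrite -mulr_algl exprMn frob_alg mulr_algl. Qed.

Lemma frob_comp i j x : x ^+ (q ^ i) ^+ (q ^ j) = x ^+ (q ^ (i + j)).
Proof. by rewrite -exprM -expnD. Qed.

Lemma frob_id x : x ^+ (q ^ n) = x.
Proof. by apply/eqP; rewrite -(@Fermat's_little_theorem _ L {:L}%AS) memvf. Qed.

Lemma frob_fixed_alg x : x ^+ q = x -> exists c, x = c%:A.
Proof.
move=> /eqP xq; have /vlineP[c ->] : x \in 1%VS.
  by rewrite (@Fermat's_little_theorem _ L 1%AS) dimv1 expn1.
by exists c.
Qed.

Lemma inj_fieldExt_bij (f : L -> L) : injective f -> bijective f.
Proof. exact: (@injF_bij (finvect_type L)). Qed.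

Definition linq u x := \sum_(i < size u) u`_i *: x ^+ (q ^ i).

Fact linq_is_linear u : linear (linq u).
Proof.
move=> a x y; rewrite /linq scaler_sumr -big_split; apply: eq_bigr => i _.
by rewrite frobD frobZ scalerDr !scalerA mulrC.
Qed.

HB.instance Definition _ u :=
  GRing.isLinear.Build F L L *:%R (linq u) (linq_is_linear u).

Lemma linq_widen u k x :
  (size u <= k)%N -> linq u x = \sum_(i < k) u`_i *: x ^+ (q ^ i).
Proof.
move=> le_u_k; rewrite /linq (big_ord_widen k (fun i => u`_i *: x ^+ (q ^ i)) le_u_k).
rewrite big_mkcond; apply: eq_bigr => i _; case: ltnP => // le_u_i.
by rewrite nth_default // scale0r.
Qed.

Lemma linq_poly0 x : linq 0 x = 0.
Proof. by rewrite /linq size_poly0 big_ord0. Qed.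

Lemma linq_polyD u v x : linq (u + v) x = linq u x + linq v x.
Proof.
pose k := maxn (size u) (size v).
rewrite (@linq_widen (u + v) k) ?(leq_trans (size_polyD _ _)) //.
rewrite (@linq_widen u k) ?leq_maxl // (@linq_widen v k) ?leq_maxr //.
by rewrite -big_split; apply: eq_bigr => i _; rewrite coefD scalerDl.
Qed.

Lemma linq_polyZ c u x : linq (c *: u) x = c *: linq u x.
Proof.
rewrite (@linq_widen _ (size u)) ?size_scale_leq // /linq scaler_sumr.
by apply: eq_bigr => i _; rewrite coefZ scalerA.
Qed.

Lemma linqC c x : linq c%:P x = c *: x.
Proof. by rewrite (@linq_widen _ 1) ?size_polyC_leq1 // big_ord1 coefC expn0 expr1. Qed.

Lemma linq1 x : linq 1 x = x.
Proof. by rewrite -polyC1 linqC scale1r. Qed.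

Lemma linqXn i x : linq 'X^i x = x ^+ (q ^ i).
Proof.
rewrite /linq size_polyXn big_ord_recr /= coefXn eqxx scale1r big1 ?add0r //.
by move=> j _; rewrite coefXn (ltn_eqF (ltn_ord j)) scale0r.
Qed.

Lemma linqMX u x : linq (u * 'X) x = linq u (x ^+ q).
Proof.
rewrite (@linq_widen _ (size u).+1); last first.
  by rewrite (leq_trans (size_polyMleq _ _)) // size_polyX addn2.
rewrite big_ord_recl coefMX scale0r add0r; apply: eq_bigr => i _.
by rewrite coefMX /= -exprM -expnS.
Qed.

Lemma linq_frob u k x : linq u x ^+ (q ^ k) = linq u (x ^+ (q ^ k)).
Proof.
rewrite frob_sum; apply: eq_bigr => i _.
by rewrite frobZ !frob_comp addnC.
Qed.

Lemma linqM u v x : linq (u * v) x = linq u (linq v x).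
Proof.
elim/poly_ind: u v x => [|u c IHu] v x; first by rewrite mul0r !linq_poly0.
rewrite mulrDl -mulrA [_ * v]mulrC linq_polyD IHu linqMX mul_polyC linq_polyZ.
by rewrite linq_polyD linqC linqMX -[q in linq v x ^+ q]expn1 linq_frob expn1.
Qed.

Lemma linq_fixed u y : y ^+ q = y -> linq u y = u.[1] *: y.
Proof.
move=> yq; rewrite /linq horner_coef scaler_suml; apply: eq_bigr => i _.
by rewrite frob_fixed // expr1n mulr1.
Qed.

Definition trq k := linq (\sum_(i < k) 'X^i).

HB.instance Definition _ k := GRing.Linear.on (trq k).

Lemma trqE k x : trq k x = \sum_(i < k) x ^+ (q ^ i).
Proof.
rewrite /trq (big_morph (linq^~ x) (fun u v => linq_polyD u v x) (linq_poly0 x)).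
by apply: eq_bigr => i _; rewrite linqXn.
Qed.

Lemma trq_alg k c : trq k c%:A = (c *+ k)%:A.
Proof.
rewrite trqE (eq_bigr (fun=> c%:A)) => [|i _]; last exact: frob_alg.
by rewrite sumr_const card_ord scalerMnl.
Qed.

Lemma linq_trq u k x : linq u (trq k x) = trq k (linq u x).
Proof. by rewrite /trq -!linqM mulrC. Qed.

Lemma Xn_sub1_divp k : ('X^k - 1) %/ ('X - 1) = \sum_(i < k) 'X^i :> {poly F}.
Proof. by rewrite subrX1 mulrC mulpK // -polyC1 polyXsubC_eq0. Qed.

(* Bezout: [a u + b (X^k - 1)/(X - 1) = 1] turns into [z = L_a (L_u z) + L_b (Tr z)]. *)
Lemma linq_trq_eq0 u k z :
  coprimep u (('X^k - 1) %/ ('X - 1)) -> linq u z = 0 -> trq k z = 0 -> z = 0.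
Proof.
rewrite Xn_sub1_divp => /Bezout_eq1_coprimepP[[a b] /= Bezout] uz0 tz0.
by rewrite -(linq1 z) -Bezout linq_polyD !linqM uz0 [linq _ z]tz0 !linear0 addr0.
Qed.

Lemma trq_frob_fixed x : trq n x ^+ q = trq n x.
Proof.
have [m n_eq] : exists m, n = m.+1 by exists n.-1; rewrite prednK ?adim_gt0.
rewrite !trqE -[q in _ ^+ q]expn1 frob_sum n_eq big_ord_recr big_ord_recl /=.
rewrite frob_comp addn1 -n_eq frob_id expn0 expr1 addrC; congr (_ + _).
by apply: eq_bigr => i _; rewrite frob_comp addn1.
Qed.

Lemma trq_scalar x : exists c, trq n x = c%:A.
Proof. exact/frob_fixed_alg/trq_frob_fixed. Qed.

Lemma trq_expq_sub x : trq n (x ^+ q - x) = 0.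
Proof.
by rewrite linearB /= /trq -[q in x ^+ q]expn1 -linq_frob expn1 trq_frob_fixed subrr.
Qed.

(* Taking traces, f x = f y forces B (Tr x) = B (Tr y), hence Tr x = Tr y, and
   then L_u (x - y) = 0 = Tr (x - y). *)
Lemma bijective_linq_add_trq u (g : L -> L) (B : F -> F) (f : L -> L) :
  coprimep u (('X^n - 1) %/ ('X - 1)) -> injective B ->
  (forall c, (u.[1] * c)%:A + trq n (g c%:A) = (B c)%:A) ->
  (forall x, f x = linq u x + g (trq n x)) -> bijective f.
Proof.
move=> u_coprime B_inj trg fE; apply: inj_fieldExt_bij => x y; rewrite !fE => fxy.
have trq_f z c : trq n z = c%:A -> trq n (linq u z + g (trq n z)) = (B c)%:A.
  move=> tz; rewrite linearD /= -linq_trq tz linq_fixed ?expq_alg //.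
  by rewrite scalerA trg.
have [cx tx] := trq_scalar x; have [cy ty] := trq_scalar y.
have cxy : cx = cy.
  apply/B_inj/(fmorph_inj (in_alg L)).
  by rewrite /= -(trq_f x _ tx) -(trq_f y _ ty) fxy.
have txy : trq n x = trq n y by rewrite tx ty cxy.
apply/subr0_eq/(linq_trq_eq0 u_coprime).
  by move: fxy; rewrite linearB /= txy => /addIr ->; rewrite subrr.
by rewrite linearB /= txy subrr.
Qed.

Definition correction (a : F) (b : {poly F}) k (theta : 'I_k -> L) (t : L) :=
  - (a / n%:R)%:A * t + \sum_(i < size b) (b`_i / n%:R)%:A * t ^+ i
  + \sum_(i < k) (theta i ^+ q - theta i) * t ^+ i.

Lemma trq_correction a b k (theta : 'I_k -> L) c : n%:R != 0 :> F ->
  trq n (correction a b theta c%:A) = (b.[c] - a * c)%:A.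
Proof.
move=> n_neq0; have alg_exp i : c%:A ^+ i = (c ^+ i)%:A :> L by rewrite exprZn expr1n.
have -> : correction a b theta c%:A = ((b.[c] - a * c) / n%:R)%:A
    + \sum_(i < k) (theta i ^+ q - theta i) * c%:A ^+ i.
  rewrite /correction; congr (_ + _).
  under eq_bigr => i _ do rewrite alg_exp mulr_algl scalerA.
  rewrite mulNr mulr_algl scalerA -scaleNr -scaler_suml -scalerDl; congr (_ *: 1).
  rewrite horner_coef addrC mulrBl mulrAC mulr_suml; congr (_ - _).
  by apply: eq_bigr => i _; rewrite mulrAC.
rewrite linearD /= trq_alg -[(_ / _) *+ _]mulr_natr divfK //.
rewrite linear_sum big1 ?addr0 // => i _.
by rewrite alg_exp mulr_algr linearZ /= trq_expq_sub scaler0.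
Qed.

Lemma horner_lin_assoc u x : (map_poly (in_alg L) (lin_assoc q u)).[x] = linq u x.
Proof.
rewrite /lin_assoc raddf_sum /= horner_sum; apply: eq_bigr => i _.
by rewrite map_polyZ map_polyXn hornerZ hornerXn mulr_algl.
Qed.

Lemma horner_trace_poly k x : (trace_poly L q k).[x] = trq k x.
Proof. by rewrite trqE horner_sum; apply: eq_bigr => i _; rewrite hornerXn. Qed.

End LinearizedPolynomials.

Theorem corollary3p7 (F : finFieldType) (L : fieldExtType F) (p n : nat)
  (hp : p \in [pchar F]) (hn0 : (0 < n)%N) (hpn : ~~ (p %| n)%N)
  (hdim : \dim {:L} = n)
  (h b : {poly F})
  (hh : coprimep h (('X^n - 1) %/ ('X - 1)))
  (hb : bijective (fun x : F => b.[x]))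
  (theta : 'I_#|F| -> L) :
  let q := #|F| in
  let T : {poly L} := trace_poly L q n in
  let P : {poly L} :=
    map_poly (in_alg L) (lin_assoc q h)
    - ((h.[1] / n%:R)%:A)%:P * T
    + \sum_(i < size b) ((b`_i / n%:R)%:A)%:P * T ^+ i
    + \sum_(i < q) ((theta i) ^+ q - theta i)%:P * T ^+ i in
  bijective (fun x : L => P.[x]) /\
  (coprimep (h + 1) (('X^n - 1) %/ ('X - 1)) ->
   bijective (fun x : F => b.[x] + x) ->
   bijective (fun x : L => P.[x] + x)).
Proof.
move=> q T P; subst n.
have n_neq0 : (\dim {:L})%:R != 0 :> F by rewrite -(dvdn_pcharf hp).
pose g := correction h.[1] b theta.
have hornerP x : P.[x] = linq h x + g (trq (\dim {:L}) x).
  rewrite /P /T /g /correction !hornerD hornerN !horner_sum_polyC_exp.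
  by rewrite horner_lin_assoc hornerCM horner_trace_poly mulNr !addrA.
have trg c : (h.[1] * c)%:A + trq (\dim {:L}) (g c%:A) = (b.[c])%:A.
  by rewrite /g trq_correction // -scalerDl addrC subrK.
split=> [|h1_coprime b1_bij].
  exact: bijective_linq_add_trq hh (bij_inj hb) trg hornerP.
have trg1 c : ((h + 1).[1] * c)%:A + trq (\dim {:L}) (g c%:A) = (b.[c] + c)%:A.
  by rewrite !hornerE mulrDl mul1r !scalerDl addrAC trg.
apply: bijective_linq_add_trq h1_coprime (bij_inj b1_bij) trg1 _ => x.
by rewrite hornerP linq_polyD linq1 addrAC.
Qed.
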